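(* For $n\ge1$ let $\mathcal{S}_{2n}=\{-n,\dots,-1,1,\dots,n\}$ and $\mathcal{S}_{2n+1}=\mathcal{S}_{2n}\cup\{0\}$. For $m\ge2$ let $T_m(z)=\sum_{\ell\ge0}t_{m,\ell}z^\ell$, where $t_{m,\ell}$ is the number of walks $0=y_0,y_1,\dots,y_\ell=-1$ with steps $y_i-y_{i-1}\in\mathcal{S}_m$ and $y_i\ge0$ for all $0\le i<\ell$ (walks absorbed at $-1$). Then the coefficients of $T_2(z)$ are the Catalan numbers ($[z^{2n+1}]T_2=\frac1{n+1}\binom{2n}{n}$, even coefficients zero), the coefficients of $T_3(z)$ are the Motzkin numbers ($[z^{n+1}]T_3$ is the $n$-th Motzkin number), and $T_4(z)=G_{0,1}(z)$, where $[z^\ell]G_{0,1}(z)$ is the number of walks $0=y_0,\dots,y_\ell=1$ with steps in $\{-2,-1,1,2\}$ and $y_i\ge1$ for all $1\le i\le\ell$.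
   Context: The $n$-th Motzkin number is the number of walks of length $n$ from $0$ to $0$ with steps in $\{-1,0,1\}$ never going below $0$. *)

From mathcomp Require Import all_boot all_order all_algebra.
Set Implicit Arguments. Unset Strict Implicit. Unset Printing Implicit Defensive.
Import GRing.Theory Num.Theory.
Local Open Scope ring_scope.

Fixpoint step_seqs (S : seq int) (l : nat) : seq (seq int) :=
  if l is l'.+1 then [seq s :: w | s <- S, w <- step_seqs S l'] else [:: [::]].

Definition positions (w : seq int) : seq int := 0 :: scanl +%R 0 w.

(* Number of walks 0 = y_0, ..., y_l = target with steps in S (a duplicate-free
   list) such that ok i y_i holds for every 0 <= i <= l. *)
Definition walks_count (S : seq int) (l : nat) (ok : nat -> int -> bool)
    (target : int) : nat :=
  count (fun w => (last 0 (positions w) == target)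
                  && all (fun i => ok i (nth 0 (positions w) i)) (iota 0 l.+1))
        (step_seqs S l).

Definition stepset (m : nat) : seq int :=
  [seq (k%:Z) | k <- iota 1 m./2] ++ [seq - (k%:Z) | k <- iota 1 m./2]
  ++ (if odd m then [:: 0] else [::]).

Definition t_coef (m l : nat) : nat :=
  walks_count (stepset m) l (fun i y => (i < l)%N ==> (0 <= y)) (-1).

Definition motzkin (n : nat) : nat :=
  walks_count [:: -1; 0; 1] n (fun _ y => 0 <= y) 0.

Definition G01_coef (l : nat) : nat :=
  walks_count [:: -2; -1; 1; 2] l (fun i y => (1 <= i)%N ==> (1 <= y)) 1.

From mathcomp Require Import all_boot all_order all_algebra.
From mathcomp Require Import zify.
Import GRing.Theory Num.Theory.
Set Implicit Arguments. Unset Strict Implicit. Unset Printing Implicit Defensive.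

(* Steps of S_2 and S_3 are at least -1, so a walk absorbed at -1 is a
   nonnegative excursion followed by a final step -1: t_{2,n+1} and t_{3,n+1}
   count the nonnegative excursions of length n with these steps, i.e. Dyck and
   Motzkin paths.  Nonnegative +-1 walks of length k from height h to 0 satisfy
   D_{k+1}(h) = D_k(h+1) + D_k(h-1), which is solved by the ballot numbers
   C(k,u) - C(k,u-1); at h = 0, k = 2n this is the Catalan number.  A +-1 walk of
   even length ends at an even height, so it never ends at -1.  For S_4, reading
   a walk backwards with negated steps maps the walks 0 -> -1 that stay >= 0
   before the end onto the walks 0 -> 1 that stay >= 1 after the start. *)

Lemma count_bij (T1 T2 : eqType) (s1 : seq T1) (s2 : seq T2)
    (P : pred T1) (Q : pred T2) (f : T1 -> T2) :
  uniq s1 -> uniq s2 -> injective f ->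
  (forall x, x \in s1 -> P x -> (f x \in s2) && Q (f x)) ->
  (forall y, y \in s2 -> Q y -> exists2 x, (x \in s1) && P x & y = f x) ->
  count P s1 = count Q s2.
Proof.
move=> u1 u2 f_inj fPQ fQP; rewrite -!size_filter -(size_map f).
apply/perm_size/uniq_perm => [|| y].
- by rewrite (map_inj_uniq f_inj) filter_uniq.
- exact: filter_uniq.
apply/mapP/idP => [[x] | ].
  by rewrite mem_filter => /andP[Px xs1] ->; rewrite mem_filter andbC fPQ.
rewrite mem_filter => /andP[Qy ys2]; have [x /andP[xs1 Px] ->] := fQP y ys2 Qy.
by exists x; rewrite // mem_filter Px.
Qed.

Section Walks.
Local Open Scope ring_scope.
Implicit Types (S : seq int) (w : seq int) (h : int) (ok : nat -> int -> bool).

Lemma mem_step_seqs S l w :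
  (w \in step_seqs S l) = (size w == l) && all (mem S) w.
Proof.
elim: l w => [|l IH] [|a w] //=; first by apply/allpairsP => -[[x y] []].
apply/allpairsP/idP => [[[x y] /= [xS yT [-> ->]]] | /and3P[sz aS wS]].
  by move: yT; rewrite IH xS eqSS => /andP[-> ->].
by exists (a, w); rewrite /= IH -eqSS sz.
Qed.

Lemma uniq_step_seqs S l : uniq S -> uniq (step_seqs S l).
Proof.
move=> uS; elim: l => [|l IH] //=.
by apply: allpairs_uniq => // -[x1 y1] [x2 y2] _ _ /= [-> ->].
Qed.

Lemma perm_step_seqs S S' l : perm_eq S S' -> perm_eq (step_seqs S l) (step_seqs S' l).
Proof. by move=> eqS; elim: l => [|l IH] //=; apply: perm_allpairs. Qed.

Lemma count_step_seqsS S l (P : pred (seq int)) :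
  count P (step_seqs S l.+1) =
  (\sum_(s <- S) count (fun w => P (s :: w)) (step_seqs S l))%N.
Proof.
rewrite /=; move: (step_seqs S l) => T; elim: S => [|s S IH]; first by rewrite big_nil.
by rewrite big_cons /= count_cat count_map IH.
Qed.

Fixpoint all_visits ok h w : bool :=
  ok 0%N h && (if w is s :: w' then all_visits (fun i => ok i.+1) (h + s) w' else true).

Lemma all_visitsE ok h w :
  all_visits ok h w =
  all (fun i => ok i (h + \sum_(x <- take i w) x)) (iota 0 (size w).+1).
Proof.
have iotaS0 n : iota 0 n.+1 = 0%N :: map succn (iota 0 n).
  by rewrite /= -[1%N]/(1 + 0)%N iotaDl.
elim: w ok h => [|s w IH] ok h; first by rewrite /= big_nil addr0 andbT.
rewrite [LHS]/= IH; change (size (s :: w)) with (size w).+1.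
move: (size w).+1 => n.
rewrite iotaS0 /= all_map big_nil addr0.
by congr (_ && _); apply: eq_all => i /=; rewrite big_cons addrA.
Qed.

Lemma eq_in_all_visits ok ok' h w :
  (forall i y, (i <= size w)%N -> ok i y = ok' i y) ->
  all_visits ok h w = all_visits ok' h w.
Proof.
move=> eq_ok; rewrite !all_visitsE; apply: eq_in_all => i.
by rewrite mem_iota ltnS => /andP[_ /eq_ok].
Qed.

Lemma all_visits_last ok h w : all_visits ok h w -> ok (size w) (h + \sum_(x <- w) x).
Proof.
by rewrite all_visitsE => /allP/(_ (size w)); rewrite mem_iota take_size ltnS leqnn; apply.
Qed.

Lemma all_visits_rcons ok h w a :
  all_visits ok h (rcons w a) =
  all_visits ok h w && ok (size w).+1 (h + \sum_(x <- w) x + a).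
Proof.
elim: w ok h => [|s w IH] ok h /=; first by rewrite big_nil addr0 !andbT.
by rewrite IH andbA big_cons addrA.
Qed.

Lemma nth_positions w i :
  (i <= size w)%N -> nth 0 (positions w) i = \sum_(x <- take i w) x.
Proof.
have foldl_sum (a : int) (s : seq int) : foldl +%R a s = a + \sum_(x <- s) x.
  elim: s a => [|x s IH] a /=; first by rewrite big_nil addr0.
  by rewrite IH big_cons addrA.
case: i => [|i] le_iw; first by rewrite take0 big_nil.
by rewrite /positions /= nth_scanl // foldl_sum add0r.
Qed.

Lemma last_positions w : last 0 (positions w) = \sum_(x <- w) x.
Proof.
rewrite (last_nth 0) /positions /= size_scanl -/(positions w).
by rewrite nth_positions // take_size.
Qed.

Lemma walks_countE S l ok t :
  walks_count S l ok t =
  count (fun w => (\sum_(x <- w) x == t) && all_visits ok 0 w) (step_seqs S l).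
Proof.
apply: eq_in_count => w; rewrite mem_step_seqs => /andP[/eqP sz _].
rewrite last_positions all_visitsE sz; congr (_ && _).
apply: eq_in_all => i; rewrite mem_iota ltnS add0r => /andP[_ le_il].
by rewrite nth_positions ?sz.
Qed.

Lemma walks_count_perm S S' l ok t :
  perm_eq S S' -> walks_count S l ok t = walks_count S' l ok t.
Proof. by move=> eqS; rewrite /walks_count; have /permP -> := perm_step_seqs l eqS. Qed.

Lemma walks_count_absorbed S n :
  uniq S -> -1 \in S -> all (fun s => -1 <= s) S ->
  walks_count S n.+1 (fun i y => (i < n.+1)%N ==> (0 <= y)) (-1) =
  walks_count S n (fun _ y => 0 <= y) 0.
Proof.
move=> uS Sm1 /allP S_ge; rewrite !walks_countE.
have ok_short w : size w = n ->
    all_visits (fun i y => (i < n.+1)%N ==> (0 <= y)) 0 w =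
    all_visits (fun _ y => 0 <= y) 0 w.
  by move=> sz; apply: eq_in_all_visits => i y; rewrite sz -ltnS => ->.
symmetry; apply: (count_bij (f := rcons^~ (-1))); rewrite ?uniq_step_seqs //.
- exact: rcons_injl.
- move=> w; rewrite mem_step_seqs => /andP[/eqP sz Sw] /andP[/eqP sum0 ok_w].
  rewrite mem_step_seqs size_rcons sz eqxx all_rcons Sw big_rcons /= sum0.
  by rewrite all_visits_rcons ok_short // ok_w sum0 sz ltnn sub0r eqxx andbT; apply/and4P.
move=> w; rewrite mem_step_seqs => /andP[/eqP sz Sw] /andP[/eqP sum_m1 ok_w].
case/lastP: w sz Sw sum_m1 ok_w => [|w a] //.
rewrite size_rcons all_rcons big_rcons all_visits_rcons /= => -[sz] /andP[Sa Sw].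
move=> sum_m1 /andP[ok_w _]; rewrite ok_short // in ok_w.
have := all_visits_last ok_w; rewrite add0r => sum_ge0.
(* A step >= -1 from a height >= 0 reaches -1 only as the step -1 from 0. *)
have [-> sum0] : a = -1 /\ \sum_(x <- w) x = 0.
  by move: (S_ge a Sa) sum_ge0 sum_m1; move: (\sum_(x <- w) x) => s; lia.
by exists w; rewrite // mem_step_seqs sz eqxx Sw sum0 eqxx ok_w.
Qed.

Definition rev_walk w := rev (map -%R w).

Lemma rev_walkK : involutive rev_walk.
Proof.
move=> w; rewrite /rev_walk map_rev revK -map_comp map_id_in // => x _ /=.
by rewrite opprK.
Qed.

Lemma size_rev_walk w : size (rev_walk w) = size w.
Proof. by rewrite size_rev size_map. Qed.

Lemma sum_rev_walk w : \sum_(x <- rev_walk w) x = - \sum_(x <- w) x.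
Proof. by rewrite big_rev big_map sumrN. Qed.

Lemma sum_take_rev_walk w i : (i <= size w)%N ->
  \sum_(x <- take i (rev_walk w)) x =
  \sum_(x <- take (size w - i) w) x - \sum_(x <- w) x.
Proof.
move=> le_iw; rewrite take_rev size_map -map_drop big_rev big_map sumrN.
have -> : \sum_(x <- w) x =
    \sum_(x <- take (size w - i) w) x + \sum_(x <- drop (size w - i) w) x.
  by rewrite -big_cat cat_take_drop.
by rewrite opprD addrA subrr add0r.
Qed.

Lemma all_visits_rev_walk ok w :
  all_visits ok 0 (rev_walk w) =
  all_visits (fun i y => ok (size w - i)%N (y - \sum_(x <- w) x)) 0 w.
Proof.
rewrite !all_visitsE size_rev_walk.
have mem_iota_le i : (i \in iota 0 (size w).+1) = (i <= size w)%N.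
  by rewrite mem_iota ltnS.
apply/allP/allP => ok_w i; rewrite mem_iota_le => le_iw;
  have := ok_w (size w - i)%N; rewrite mem_iota_le leq_subr !add0r => /(_ isT).
  by rewrite sum_take_rev_walk ?leq_subr // subKn.
by rewrite subKn // sum_take_rev_walk.
Qed.

Lemma perm_map_rev_walk S l : uniq S -> perm_eq (map -%R S) S ->
  perm_eq (map rev_walk (step_seqs S l)) (step_seqs S l).
Proof.
move=> uS S_opp; apply: uniq_perm => [|| w].
- by rewrite (map_inj_uniq (can_inj rev_walkK)) uniq_step_seqs.
- exact: uniq_step_seqs.
rewrite -{1}(rev_walkK w) (mem_map (can_inj rev_walkK)) !mem_step_seqs.
rewrite size_rev_walk all_rev all_map; congr (_ && _); apply: eq_all => s /=.
by rewrite -[in LHS](perm_mem S_opp) (mem_map oppr_inj).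
Qed.

End Walks.

Section Dyck.
Local Open Scope ring_scope.

Definition dyck_count (k : nat) (h : int) : nat :=
  count (fun w => (h + \sum_(x <- w) x == 0) && all_visits (fun _ y => 0 <= y) h w)
    (step_seqs [:: 1; -1] k).

Lemma dyck_countS k h :
  dyck_count k.+1 h =
  if 0 <= h then (dyck_count k (h + 1) + dyck_count k (h - 1))%N else 0%N.
Proof.
rewrite /dyck_count count_step_seqsS !big_cons big_nil addn0 /=.
case: ifP => _; first by congr addn; apply: eq_count => w; rewrite big_cons addrA.
by rewrite !(@eq_count _ _ pred0) ?count_pred0 // => w /=; rewrite andbF.
Qed.

Lemma dyck_count_gt k h : k%:Z < h -> dyck_count k h = 0%N.
Proof.
elim: k h => [|k IH] h lt_kh.
  by rewrite /dyck_count /= big_nil addr0 (negbTE (lt0r_neq0 lt_kh)).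
by rewrite dyck_countS !IH; [case: ifP | lia | lia].
Qed.

Definition ballot (k u : nat) : int :=
  'C(k, u)%:Z - (if u is u'.+1 then 'C(k, u')%:Z else 0).

Lemma ballot0 k : ballot k 0 = 1.
Proof. by rewrite /ballot bin0 subr0. Qed.

Lemma ballotS k u : ballot k u + ballot k u.+1 = ballot k.+1 u.+1.
Proof. by rewrite /ballot; case: u => [|u]; rewrite !binS ?bin0 !PoszD; lia. Qed.

Lemma ballot_diag d : ballot (d + d).+1 d.+1 = 0.
Proof.
have le_d_dd : (d <= d + d)%N by rewrite leq_addr.
by rewrite /ballot -(@bin_sub (d + d).+1 d) ?subSn ?addnK ?subrr ?leqW.
Qed.

(* [u] up-steps and [d] down-steps lead from height [d - u] to 0; at the boundary
   [u = d.+1] the start height is -1 and both sides vanish. *)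
Lemma dyck_count_ballot k u d : (u + d)%N = k -> (u <= d.+1)%N ->
  (dyck_count k (d%:Z - u%:Z))%:Z = ballot k u.
Proof.
elim: k u d => [|k IH] u d.
  by case: u => //; case: d => // _ _; rewrite /dyck_count /= big_nil.
move=> ud_k le_ud; rewrite dyck_countS; case: ifP => h_ge0; last first.
  have [-> ->] : u = d.+1 /\ k = (d + d)%N by lia.
  by rewrite ballot_diag.
case: d ud_k le_ud h_ge0 => [|d] ud_k le_ud h_ge0; first lia.
case: u ud_k le_ud h_ge0 => [|u] ud_k le_ud h_ge0.
  rewrite dyck_count_gt ?add0n; last lia.
  have -> : d.+1%:Z - 0%:Z - 1 = d%:Z - 0%:Z by lia.
  by rewrite IH ?ballot0 //; lia.
have -> : d.+1%:Z - u.+1%:Z + 1 = d.+1%:Z - u%:Z by lia.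
have -> : d.+1%:Z - u.+1%:Z - 1 = d%:Z - u.+1%:Z by lia.
by rewrite PoszD !IH ?ballotS //; lia.
Qed.

Lemma dyck_count_catalan n : (dyck_count (2 * n) 0 * n.+1)%N = 'C(2 * n, n).
Proof.
have nn_2n : (n + n = 2 * n)%N by rewrite addnn mul2n.
have := dyck_count_ballot nn_2n (leqnSn n); rewrite subrr {nn_2n}.
case: n => [|n]; first by rewrite /ballot bin0 => -[->].
have := mul_bin_left (2 * n.+1) n; rewrite /ballot.
move: (dyck_count _ _) 'C(2 * n.+1, n.+1) 'C(2 * n.+1, n) => a b c.
have -> : (2 * n.+1 - n = n.+2)%N by lia.
by move=> ballot_n bin_rec; nia.
Qed.

Lemma pm1_sum_parity w : all (mem [:: 1; -1]) w ->
  exists c : int, \sum_(x <- w) x = (size w)%:Z - 2 * c.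
Proof.
elim: w => [|s w IH] /=; first by exists 0; rewrite big_nil.
rewrite big_cons => /andP[s_pm1 /IH[c ->]]; move: (size w) => m.
by move: s_pm1; rewrite !inE => /orP[] /eqP ->; [exists c | exists (c + 1)]; lia.
Qed.

End Dyck.

Lemma t_coef2_even n : t_coef 2 (2 * n) = 0.
Proof.
rewrite /t_coef walks_countE (@eq_in_count _ _ pred0) ?count_pred0 // => w.
rewrite mem_step_seqs => /andP[/eqP sz pm1_w]; have [c ->] := pm1_sum_parity pm1_w.
by rewrite sz; apply/negbTE/nandP; left; apply/eqP; rewrite PoszM; lia.
Qed.

Lemma t_coef2_odd n : t_coef 2 (2 * n).+1 * n.+1 = 'C(2 * n, n).
Proof.
rewrite /t_coef walks_count_absorbed // walks_countE -dyck_count_catalan.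
by congr (_ * _); apply: eq_count => w; rewrite add0r.
Qed.

Lemma t_coef3 n : t_coef 3 n.+1 = motzkin n.
Proof. by rewrite /t_coef walks_count_absorbed //; apply: walks_count_perm. Qed.

Lemma t_coef4 l : t_coef 4 l = G01_coef l.
Proof.
rewrite /t_coef (@walks_count_perm _ [:: -2; -1; 1; 2]%R) // /G01_coef !walks_countE.
rewrite -[in RHS](permP (@perm_map_rev_walk _ l _ _)) // count_map.
apply: eq_in_count => w; rewrite mem_step_seqs => /andP[/eqP sz _] /=.
rewrite sum_rev_walk eqr_oppLR all_visits_rev_walk sz; case: eqP => // ->.
by apply: eq_in_all_visits => i y _; rewrite subn_gt0 opprK addrC lerDl.
Qed.

Theorem proposition5p1 :
  (forall n : nat,
      ((t_coef 2 (2 * n).+1)%:R = ('C(2 * n, n))%:R / (n.+1)%:R :> rat)%R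
      /\ t_coef 2 (2 * n) = 0%N)
  /\ (forall n : nat, t_coef 3 n.+1 = motzkin n)
  /\ (forall l : nat, t_coef 4 l = G01_coef l).
Proof.
split=> [n|]; last by split; [exact: t_coef3 | exact: t_coef4].
by rewrite t_coef2_even -t_coef2_odd natrM mulfK ?pnatr_eq0.
Qed.
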